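(* Let $\mu$ be a finite measure on $\mathbb{N}_+$ with $\mu(n)\sim b(\log n)^\alpha n^{-2}$ as $n\to\infty$ for constants $b>0,\alpha>0$. Then as $n\to\infty$, $$\mathcal{L}^f\Big(\frac{1}{\log\log(\cdot+10)}\Big)(n)\le-\frac{\Phi_\mu(n)}{(n+10)\log(n+10)(\log\log(n+10))^2}-\Big(2\log2-\frac12\Big)\frac{b(\log n)^{\alpha-1}}{(\log\log n)^2}+o\Big(\frac{(\log n)^{\alpha-1}}{(\log\log n)^2}\Big).$$
   Context: $\mathbb{N}_+=\{1,2,\dots\}$, $\mu(k):=\mu(\{k\})$, $\Phi_\mu(n)=n\sum_{k=1}^n k\mu(k)$. For $g:\mathbb{N}_+\to\mathbb{R}$ with $\sum_k|g(n+k)|\mu(k)<\infty$, the fragmentation operator is $\mathcal{L}^fg(n)=n\sum_{k=1}^\infty\mu(k)[g(n+k)-g(n)]$; here it is applied to $g(n)=1/\log\log(n+10)$. *)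

From Stdlib Require Export Reals Lra.
From Coquelicot Require Export Coquelicot.
Open Scope R_scope.

(* A finite measure on N_+ is represented by its point masses mu k, k >= 1
   (the value mu 0 is never used). *)
Definition finite_measure_Npos (mu : nat -> R) : Prop :=
  (forall k, (1 <= k)%nat -> 0 <= mu k) /\ ex_series (fun k => mu (S k)).

Definition g_loglog (n : nat) : R := / ln (ln (INR n + 10)).

Definition Lf (mu : nat -> R) (g : nat -> R) (n : nat) : R :=
  INR n * Series (fun k => mu (S k) * (g (n + S k)%nat - g n)).

(* Phi_mu(n) = n * sum_{k=1}^n k mu(k)  (the k = 0 term is 0 * mu 0 = 0) *)
Definition Phi (mu : nat -> R) (n : nat) : R :=
  INR n * sum_f_R0 (fun k => INR k * mu k) n.

(* Write a = n + 10, L = ln a, l = ln L and P = (ln n)^alpha.  Expanding the logarithms twice,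
   1 / ln ln (a + k) - 1 / l <= -(u - 2 u^2 / L) / (L l^2) with u = ln (1 + k / a).  All terms
   of the series defining L^f are nonpositive, so the series may be truncated at k = 1024 n.
   - For k <= n the linear part k / (a L l^2) of the increment is exactly the Phi term; the
     remainder is of order (k/a)^2 / (2 + k/a), and with mu(k) ~ b P / k^2 it sums to at most
     about ln (3/2) b P / (a L l^2).
   - For n < k <= 1024 n the increments sum to at most -(1 - o(1)) b P / (L l^2) times
     sum_(k > n) ln (1 + k/a) / k^2 ~ (2 ln 2) / a, up to the tail beyond 1024 n. *)

From Stdlib Require Import Reals Lra Lia.
From Coquelicot Require Import Coquelicot.
Open Scope R_scope.

Lemma ln1p_le z : -1 < z -> ln (1 + z) <= z.
Proof.
  intros Hz. rewrite <- (ln_exp z) at 2.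
  apply ln_le; [lra | pose proof (exp_ineq1_le z); lra].
Qed.

Lemma ln_ge_1_sub_inv y : 0 < y -> 1 - / y <= ln y.
Proof.
  intros Hy. assert (Hy' : 0 < / y) by (apply Rinv_0_lt_compat; lra).
  assert (H := ln1p_le (/ y - 1) ltac:(lra)).
  replace (1 + (/ y - 1)) with (/ y) in H by ring.
  rewrite ln_Rinv in H by lra. lra.
Qed.

Lemma ln_nonneg x : 1 <= x -> 0 <= ln x.
Proof. intros Hx. rewrite <- ln_1. apply ln_le; lra. Qed.

Lemma one_le_ln x : 3 <= x -> 1 <= ln x.
Proof.
  intros Hx. rewrite <- (ln_exp 1). apply ln_le; [apply exp_pos|].
  pose proof exp_le_3. lra.
Qed.

(* Its defect s - 2 s / (2 + s) = s^2 / (2 + s) is second order; it bounds what the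
   fragments k <= n contribute beyond the part cancelled by the Phi term. *)
Lemma ln1p_ge_pade s : 0 <= s -> 2 * s / (2 + s) <= ln (1 + s).
Proof.
  intros Hs.
  set (f x := ln (1 + x) - 2 * x / (2 + x)).
  set (df x := x ^ 2 / ((1 + x) * (2 + x) ^ 2)).
  destruct (Req_dec s 0) as [->|Hs0].
  { rewrite !Rplus_0_r, ln_1. unfold Rdiv. lra. }
  destruct (MVT_cor2 f df 0 s) as [c [Hfc Hc]]; [lra| |].
  { intros c Hc. apply is_derive_Reals. unfold f, df.
    auto_derive; [lra|field; lra]. }
  assert (0 <= df c) by (apply Rdiv_le_0_compat; nra).
  assert (f 0 = 0) by (unfold f; rewrite !Rplus_0_r, ln_1; unfold Rdiv; ring).
  unfold f in *. nra.
Qed.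

Lemma inv_succ_le_ln_diff z : 0 < z -> / (z + 1) <= ln (z + 1) - ln z.
Proof.
  intros Hz. assert (H := ln_ge_1_sub_inv ((z + 1) / z) ltac:(apply Rdiv_lt_0_compat; lra)).
  replace (1 - / ((z + 1) / z)) with (/ (z + 1)) in H by (field; lra).
  unfold Rdiv in H. rewrite ln_mult, ln_Rinv in H by (try apply Rinv_0_lt_compat; lra).
  lra.
Qed.

Lemma ln2_lt_1 : ln 2 < 1.
Proof.
  rewrite <- (ln_exp 1). apply ln_increasing; [lra|].
  pose proof (exp_ineq1 1). lra.
Qed.

Lemma ln_3_2_le : ln (3 / 2) <= 45 / 100.
Proof.
  rewrite <- (ln_exp (45 / 100)). apply ln_le; [lra|].
  replace (45 / 100) with (225 / 1000 + 225 / 1000) by field. rewrite exp_plus.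
  pose proof (exp_ineq1_le (225 / 1000)). nra.
Qed.

Lemma ln_1025_le : ln 1025 <= 11.
Proof.
  apply Rle_trans with (ln (2 ^ 11)); [apply ln_le; lra|].
  rewrite ln_pow by lra. pose proof ln2_lt_1. simpl INR. lra.
Qed.

(* Expanding twice, ln ln (a + x) = ln ln a + ln (1 + u / ln a) with u = ln (1 + x / a). *)
Lemma inv_lnln_increment_le a x : 0 < a -> 3 <= ln a -> 0 <= x ->
  / ln (ln (a + x)) - / ln (ln a) <=
  - (ln (1 + x / a) - 2 * ln (1 + x / a) ^ 2 / ln a) / (ln a * ln (ln a) ^ 2).
Proof.
  intros Ha HL Hx.
  set (L := ln a) in *. set (l := ln L). set (u := ln (1 + x / a)).
  assert (Hl : 1 <= l) by (apply one_le_ln; lra).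
  assert (Hxa : 0 <= x / a) by (apply Rdiv_le_0_compat; lra).
  assert (Hu : 0 <= u) by (apply ln_nonneg; lra).
  assert (HuL : 0 <= u / L) by (apply Rdiv_le_0_compat; lra).
  assert (E1 : ln (a + x) = L + u).
  { unfold L, u. rewrite <- ln_mult by lra. f_equal. field. lra. }
  set (v := ln (1 + u / L)).
  assert (E2 : ln (L + u) = l + v).
  { unfold l, v. rewrite <- ln_mult by lra. f_equal. field. lra. }
  assert (Hv : u / (L + u) <= v).
  { replace (u / (L + u)) with (1 - / (1 + u / L)) by (field; lra).
    apply ln_ge_1_sub_inv. lra. }
  set (w := u / (L + u)) in Hv.
  assert (Hw : 0 <= w) by (apply Rdiv_le_0_compat; lra).
  assert (Hmono : u / (l * (L + u) + u) <= v / (l + v)).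
  { replace (u / (l * (L + u) + u)) with (w / (l + w)) by (unfold w; field; nra).
    apply (Rmult_le_reg_r ((l + w) * (l + v))); [nra|].
    replace (w / (l + w) * ((l + w) * (l + v))) with (w * (l + v)) by (field; lra).
    replace (v / (l + v) * ((l + w) * (l + v))) with (v * (l + w)) by (field; lra).
    nra. }
  assert (HD : 0 < l * (L + u) + u) by nra.
  assert (Hkey : (u - 2 * u ^ 2 / L) / (L * l) <= u / (l * (L + u) + u)).
  { apply (Rmult_le_reg_r (L ^ 2 * l * (l * (L + u) + u))); [apply Rmult_lt_0_compat; nra|].
    replace ((u - 2 * u ^ 2 / L) / (L * l) * (L ^ 2 * l * (l * (L + u) + u)))
      with ((u * L - 2 * u ^ 2) * (l * (L + u) + u)) by (field; lra).
    replace (u / (l * (L + u) + u) * (L ^ 2 * l * (l * (L + u) + u)))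
      with (u * L ^ 2 * l) by (field; lra).
    (* the difference is u (L u (1 - l) - 2 u^2 (l + 1)) <= 0 *)
    assert (0 <= u * (L * u * (l - 1) + 2 * u ^ 2 * (l + 1))) by
      (apply Rmult_le_pos; [lra|]; apply Rplus_le_le_0_compat; apply Rmult_le_pos; nra).
    nra. }
  rewrite E1, E2.
  replace (/ (l + v) - / l) with (- (v / (l + v)) / l) by (field; lra).
  replace (- (u - 2 * u ^ 2 / L) / (L * l ^ 2)) with (- ((u - 2 * u ^ 2 / L) / (L * l)) / l)
    by (field; lra).
  unfold Rdiv at 1 3. apply Rmult_le_compat_r; [left; apply Rinv_0_lt_compat; lra|]. lra.
Qed.

Lemma sum_telescope (G : nat -> R) m :
  sum_f_R0 (fun i => G (S i) - G i) m = G (S m) - G 0%nat.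
Proof. induction m as [|m IH]; simpl; [ring | rewrite IH; ring]. Qed.

Lemma sum_le_Series (t : nat -> R) m : ex_series t -> (forall k, 0 <= t k) ->
  sum_f_R0 t m <= Series t.
Proof.
  intros Ht Hpos. rewrite (Series_incr_n t (S m)) by (auto; lia). simpl pred.
  assert (Series (fun k => 0 * t (S m + k)%nat) <= Series (fun k => t (S m + k)%nat)).
  { apply Series_le; [intros k; specialize (Hpos (S m + k)%nat); split; lra|].
    apply (ex_series_incr_n t (S m)), Ht. }
  rewrite Series_scal_l, Rmult_0_l in H. lra.
Qed.

Lemma Series_le_sum (t : nat -> R) m : ex_series t -> (forall k, t k <= 0) ->
  Series t <= sum_f_R0 t m.
Proof.
  intros Ht Hneg.
  assert (H := sum_le_Series (fun k => - t k) m (ex_series_opp t Ht)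
                 ltac:(intros k; specialize (Hneg k); lra)).
  rewrite Series_opp in H.
  replace (sum_f_R0 (fun k => - t k) m) with (- sum_f_R0 t m) in H
    by (clear H; induction m; simpl; [ring | rewrite <- IHm; ring]).
  lra.
Qed.

Lemma sum_inv_le_ln y m : 0 < y ->
  sum_f_R0 (fun i => / (y + INR (S i))) m <= ln (y + INR (S m)) - ln y.
Proof.
  intros Hy.
  replace (ln y) with (ln (y + INR 0)) by (simpl; f_equal; ring).
  rewrite <- (sum_telescope (fun i => ln (y + INR i))).
  apply sum_Rle. intros i _. rewrite S_INR.
  replace (y + (INR i + 1)) with (y + INR i + 1) by ring.
  apply inv_succ_le_ln_diff. pose proof (pos_INR i). lra.
Qed.

Lemma Series_le_sum_split (t : nat -> R) n m : (1 <= n)%nat ->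
  ex_series t -> (forall k, t k <= 0) ->
  Series t <= sum_f_R0 t (n - 1) + sum_f_R0 (fun i => t (n + i)%nat) m.
Proof.
  intros Hn Ht Hneg.
  rewrite (Series_le_sum t (n + m) Ht Hneg), (tech2 t (n - 1)) by lia.
  replace (S (n - 1)) with n by lia. replace (n + m - n)%nat with m by lia. lra.
Qed.

Lemma sum_inv_near_le a m : 0 < a -> INR (S m) <= a ->
  sum_f_R0 (fun i => / (2 * a + INR (S i))) m <= 45/100.
Proof.
  intros Ha Hm.
  apply Rle_trans with (ln (2 * a + INR (S m)) - ln (2 * a)); [apply sum_inv_le_ln; lra|].
  replace (ln (2 * a + INR (S m)) - ln (2 * a)) with (ln ((2 * a + INR (S m)) / (2 * a)))
    by (unfold Rdiv; rewrite ln_mult, ln_Rinv by (try apply Rinv_0_lt_compat;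
                                                  pose proof (pos_INR (S m)); lra); ring).
  apply Rle_trans with (ln (3 / 2)); [|apply ln_3_2_le].
  pose proof (pos_INR (S m)).
  apply ln_le; [apply Rdiv_lt_0_compat; lra|].
  apply (Rmult_le_reg_r (2 * a)); [lra|]. field_simplify; lra.
Qed.

(* tail_prim a x = int_x^oo ln (1 + t / a) / t^2 dt *)
Definition tail_prim (a x : R) : R := ln (1 + x / a) / x + / a * ln (1 + a / x).

Lemma tail_prim_step a x : 0 < a -> 2 <= x ->
  tail_prim a (x - 1) - tail_prim a x <= ln (1 + x / a) / (x * (x - 1)).
Proof.
  intros Ha Hx. unfold tail_prim.
  set (u' := ln (1 + (x - 1) / a)). set (u := ln (1 + x / a)).
  assert (Hxa : 0 < x / a) by (apply Rdiv_lt_0_compat; lra).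
  assert (Hxa' : 0 < (x - 1) / a) by (apply Rdiv_lt_0_compat; lra).
  assert (Hu : u = u' + ln ((a + x) / (a + x - 1))).
  { unfold u, u'. rewrite <- ln_mult by (try apply Rdiv_lt_0_compat; lra).
    f_equal. field. lra. }
  assert (Hu' : / (a + x) <= ln ((a + x) / (a + x - 1))).
  { replace (/ (a + x)) with (1 - / ((a + x) / (a + x - 1))) by (field; lra).
    apply ln_ge_1_sub_inv, Rdiv_lt_0_compat; lra. }
  assert (Hz : 0 < a / ((x - 1) * (x + a))) by (apply Rdiv_lt_0_compat; nra).
  assert (Hax : 0 < a / x) by (apply Rdiv_lt_0_compat; lra).
  assert (Hv : ln (1 + a / (x - 1)) <= ln (1 + a / x) + a / ((x - 1) * (x + a))).
  { replace (1 + a / (x - 1)) with ((1 + a / x) * (1 + a / ((x - 1) * (x + a))))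
      by (field; lra).
    rewrite ln_mult by lra. pose proof (ln1p_le (a / ((x - 1) * (x + a))) ltac:(lra)). lra. }
  assert (Hia : 0 < / a) by (apply Rinv_0_lt_compat; lra).
  apply Rle_trans with (u' / (x - 1) - u / x + / a * (a / ((x - 1) * (x + a)))); [nra|].
  apply (Rmult_le_reg_r (x * (x - 1))); [nra|].
  replace ((u' / (x - 1) - u / x + / a * (a / ((x - 1) * (x + a)))) * (x * (x - 1)))
    with (u' * x - u * (x - 1) + x * / (a + x)) by (field; lra).
  replace (u / (x * (x - 1)) * (x * (x - 1))) with u by (field; lra).
  nra.
Qed.

Lemma tail_sum_ge a x0 m : 0 < a -> 1 <= x0 ->
  x0 / (x0 + 1) * (tail_prim a x0 - tail_prim a (x0 + 1 + INR m)) <=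
  sum_f_R0 (fun i => ln (1 + (x0 + 1 + INR i) / a) / (x0 + 1 + INR i) ^ 2) m.
Proof.
  intros Ha Hx0.
  assert (Hterm : forall x, x0 + 1 <= x ->
    x0 / (x0 + 1) * (tail_prim a (x - 1) - tail_prim a x) <= ln (1 + x / a) / x ^ 2).
  { intros x Hx. pose proof (tail_prim_step a x Ha ltac:(lra)) as Hstep.
    assert (Hu : 0 <= ln (1 + x / a))
      by (apply ln_nonneg; assert (0 < x / a) by (apply Rdiv_lt_0_compat; lra); lra).
    assert (Hr : 0 <= x0 / (x0 + 1) <= (x - 1) / x).
    { split; [apply Rdiv_le_0_compat; lra|].
      apply (Rmult_le_reg_r ((x0 + 1) * x)); [nra|].
      field_simplify; nra. }
    apply Rle_trans with ((x - 1) / x * (ln (1 + x / a) / (x * (x - 1)))).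
    - apply Rle_trans with (x0 / (x0 + 1) * (ln (1 + x / a) / (x * (x - 1))));
        [apply Rmult_le_compat_l; lra|].
      apply Rmult_le_compat_r; [apply Rdiv_le_0_compat; nra | lra].
    - right. field. lra. }
  set (G i := - (x0 / (x0 + 1)) * tail_prim a (x0 + INR i)).
  replace (x0 / (x0 + 1) * (tail_prim a x0 - tail_prim a (x0 + 1 + INR m)))
    with (G (S m) - G 0%nat).
  2: { unfold G. rewrite S_INR. change (INR 0) with 0. rewrite Rplus_0_r.
       replace (x0 + (INR m + 1)) with (x0 + 1 + INR m) by ring. ring. }
  rewrite <- sum_telescope. apply sum_Rle. intros i _.
  unfold G. rewrite S_INR.
  assert (Hi0 := pos_INR i).
  assert (Hi := Hterm (x0 + 1 + INR i) ltac:(lra)).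
  replace (x0 + 1 + INR i - 1) with (x0 + INR i) in Hi by ring.
  replace (x0 + (INR i + 1)) with (x0 + 1 + INR i) by ring. lra.
Qed.

Lemma tail_prim_at_ge x : 0 < x ->
  2 * (ln 2 - 10 / x) / (x + 10) <= tail_prim (x + 10) x.
Proof.
  intros Hx. unfold tail_prim. set (a := x + 10).
  assert (Hxa : 0 < x / a) by (apply Rdiv_lt_0_compat; unfold a; lra).
  assert (Hxa1 : x / a <= a / x).
  { apply (Rmult_le_reg_r (a * x)); [unfold a; nra|].
    field_simplify; unfold a; nra. }
  assert (Hln2 : ln 2 - 10 / x <= ln (1 + x / a)).
  { replace (1 + x / a) with (2 * ((a + x) / (2 * a))) by (field; unfold a; lra).
    rewrite ln_mult by (try apply Rdiv_lt_0_compat; unfold a; lra).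
    assert (H := ln_ge_1_sub_inv ((a + x) / (2 * a)) ltac:(apply Rdiv_lt_0_compat; unfold a; lra)).
    replace (1 - / ((a + x) / (2 * a))) with (- (10 / (a + x))) in H by (unfold a; field; lra).
    assert (10 / (a + x) <= 10 / x)
      by (apply Rmult_le_compat_l; [lra | apply Rinv_le_contravar; unfold a; lra]).
    lra. }
  assert (Hu : 0 <= ln (1 + x / a)) by (apply ln_nonneg; lra).
  assert (ln (1 + x / a) <= ln (1 + a / x)) by (apply ln_le; lra).
  assert (/ a <= / x) by (apply Rinv_le_contravar; unfold a; lra).
  assert (0 < / a) by (apply Rinv_0_lt_compat; unfold a; lra).
  unfold Rdiv. nra.
Qed.

Lemma tail_prim_le a x : 0 < a -> 0 < x <= 1024 * a -> tail_prim a x <= 12 / x.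
Proof.
  intros Ha Hx. unfold tail_prim.
  assert (Hxa : 0 < x / a <= 1024).
  { split; [apply Rdiv_lt_0_compat; lra|].
    apply (Rmult_le_reg_r a); [lra|]. field_simplify; lra. }
  assert (H1 : ln (1 + x / a) <= 11)
    by (apply Rle_trans with (ln 1025); [apply ln_le; lra | apply ln_1025_le]).
  assert (H2 : ln (1 + a / x) <= a / x)
    by (apply ln1p_le; assert (0 < a / x) by (apply Rdiv_lt_0_compat; lra); lra).
  assert (0 < / a) by (apply Rinv_0_lt_compat; lra).
  assert (0 < / x) by (apply Rinv_0_lt_compat; lra).
  replace (12 / x) with (11 / x + / a * (a / x)) by (field; lra).
  unfold Rdiv. nra.
Qed.

Lemma inv_lnln_increment_near_le a x : 0 < a -> 6000 <= ln a -> 0 <= x <= a ->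
  / ln (ln (a + x)) - / ln (ln a) + x / (a * ln a * ln (ln a) ^ 2) <=
  (1 + 1/1000) * ((x / a) ^ 2 / (2 + x / a)) / (ln a * ln (ln a) ^ 2).
Proof.
  intros Ha HL Hx.
  assert (D := inv_lnln_increment_le a x Ha ltac:(lra) ltac:(lra)).
  set (L := ln a) in *. set (l := ln L) in *. set (s := x / a) in *.
  set (u := ln (1 + s)) in *.
  assert (Hl : 1 <= l) by (apply one_le_ln; lra).
  assert (Hs : 0 <= s <= 1).
  { unfold s. split; [apply Rdiv_le_0_compat; lra|].
    destruct (Req_dec x 0) as [->|]; [unfold Rdiv; lra|].
    apply (Rmult_le_reg_r a); [lra|]. field_simplify; lra. }
  assert (Hu1 : 2 * s / (2 + s) <= u) by (apply ln1p_ge_pade; lra).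
  assert (Hu2 : u <= s) by (apply ln1p_le; lra).
  assert (Hu0 : 0 <= u) by (assert (0 <= 2 * s / (2 + s)) by (apply Rdiv_le_0_compat; lra); lra).
  assert (Hq : 0 <= s ^ 2 / (2 + s)) by (apply Rdiv_le_0_compat; nra).
  assert (Hdefect : s - u <= s ^ 2 / (2 + s)).
  { replace (s ^ 2 / (2 + s)) with (s - 2 * s / (2 + s)) by (field; lra). lra. }
  assert (Hsq : 2 * u ^ 2 / L <= 1/1000 * (s ^ 2 / (2 + s))).
  { apply (Rmult_le_reg_r (L * (2 + s))); [nra|].
    replace (2 * u ^ 2 / L * (L * (2 + s))) with (2 * u ^ 2 * (2 + s)) by (field; lra).
    replace (1/1000 * (s ^ 2 / (2 + s)) * (L * (2 + s))) with (L / 1000 * s ^ 2) by (field; lra).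
    assert (u ^ 2 <= s ^ 2) by (apply pow_incr; lra). nra. }
  replace (x / (a * L * l ^ 2)) with (s / (L * l ^ 2)) by (unfold s; field; nra).
  replace ((1 + 1/1000) * (s ^ 2 / (2 + s)) / (L * l ^ 2))
    with ((s - u + 2 * u ^ 2 / L) / (L * l ^ 2) +
          ((1 + 1/1000) * (s ^ 2 / (2 + s)) - (s - u + 2 * u ^ 2 / L)) / (L * l ^ 2))
    by (field; nra).
  assert (0 <= ((1 + 1/1000) * (s ^ 2 / (2 + s)) - (s - u + 2 * u ^ 2 / L)) / (L * l ^ 2))
    by (apply Rdiv_le_0_compat; nra).
  replace ((s - u + 2 * u ^ 2 / L) / (L * l ^ 2))
    with (- (u - 2 * u ^ 2 / L) / (L * l ^ 2) + s / (L * l ^ 2)) by (field; nra).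
  lra.
Qed.

Lemma near_weight_le a x m K B : 0 < a -> 1 <= x -> 0 <= m -> 0 <= B ->
  x <= K \/ m <= B / x ^ 2 ->
  m * ((x / a) ^ 2 / (2 + x / a)) <= m * (K ^ 2 / a ^ 2) + B / (a * (2 * a + x)).
Proof.
  intros Ha Hx Hm HB Hcase.
  assert (Hs : 0 < x / a) by (apply Rdiv_lt_0_compat; lra).
  assert (HBa : 0 <= B / (a * (2 * a + x))) by (apply Rdiv_le_0_compat; nra).
  assert (HK : 0 <= m * (K ^ 2 / a ^ 2))
    by (apply Rmult_le_pos; [lra | apply Rdiv_le_0_compat; nra]).
  destruct Hcase as [HxK | HmB].
  - assert ((x / a) ^ 2 / (2 + x / a) <= K ^ 2 / a ^ 2).
    { apply Rle_trans with ((x / a) ^ 2).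
      - apply (Rmult_le_reg_r (2 + x / a)); [lra|].
        replace ((x / a) ^ 2 / (2 + x / a) * (2 + x / a)) with ((x / a) ^ 2) by (field; lra).
        nra.
      - replace ((x / a) ^ 2) with (x ^ 2 / a ^ 2) by (field; lra).
        apply Rmult_le_compat_r; [apply Rlt_le, Rinv_0_lt_compat; nra | apply pow_incr; lra]. }
    assert (m * ((x / a) ^ 2 / (2 + x / a)) <= m * (K ^ 2 / a ^ 2))
      by (apply Rmult_le_compat_l; lra).
    lra.
  - apply Rle_trans with (B / x ^ 2 * ((x / a) ^ 2 / (2 + x / a))).
    + apply Rmult_le_compat_r; [apply Rdiv_le_0_compat; nra | lra].
    + replace (B / x ^ 2 * ((x / a) ^ 2 / (2 + x / a))) with (B / (a * (2 * a + x)))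
        by (field; repeat split; lra).
      lra.
Qed.

Lemma inv_lnln_increment_far_le a x : 0 < a -> 2048000 <= ln a -> 0 <= x <= 1024 * a ->
  / ln (ln (a + x)) - / ln (ln a) <=
  - ((1 - 1/1000) * ln (1 + x / a)) / (ln a * ln (ln a) ^ 2).
Proof.
  intros Ha HL Hx.
  assert (D := inv_lnln_increment_le a x Ha ltac:(lra) ltac:(lra)).
  set (L := ln a) in *. set (l := ln L) in *. set (u := ln (1 + x / a)) in *.
  assert (Hl : 1 <= l) by (apply one_le_ln; lra).
  assert (Hs : 0 <= x / a <= 1024).
  { split; [apply Rdiv_le_0_compat; lra|].
    apply (Rmult_le_reg_r a); [lra|]. field_simplify; lra. }
  assert (Hu : 0 <= u <= 1024)
    by (split; [apply ln_nonneg | apply Rle_trans with (x / a); [apply ln1p_le|]]; lra).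
  assert (Hsq : 2 * u ^ 2 / L <= 1/1000 * u).
  { apply (Rmult_le_reg_r L); [lra|].
    replace (2 * u ^ 2 / L * L) with (2 * u * u) by (field; lra). nra. }
  apply Rle_trans with (1 := D). unfold Rdiv.
  apply Rmult_le_compat_r; [apply Rlt_le, Rinv_0_lt_compat; nra | lra].
Qed.

Lemma tail_window_ge x : 10000000 <= x ->
  (2 * ln 2 - 12/1000) / (x + 10) <=
  x / (x + 1) * (tail_prim (x + 10) x - tail_prim (x + 10) (1024 * x)).
Proof.
  intros Hx.
  assert (Hlo := tail_prim_at_ge x ltac:(lra)).
  assert (Hhi := tail_prim_le (x + 10) (1024 * x) ltac:(lra) ltac:(lra)).
  assert (Hln2 := ln2_lt_1). assert (Hln2' := ln_lt_2).
  assert (Hr : 1 - / 10000000 <= x / (x + 1)).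
  { apply (Rmult_le_reg_r (x + 1)); [lra|]. field_simplify; lra. }
  assert (Hgap : (2 * ln 2 - 119/10000) / (x + 10) <=
                 tail_prim (x + 10) x - tail_prim (x + 10) (1024 * x)).
  { apply Rle_trans with (2 * (ln 2 - 10 / x) / (x + 10) - 12 / (1024 * x)); [|lra].
    apply (Rmult_le_reg_r (x + 10)); [lra|].
    replace ((2 * ln 2 - 119/10000) / (x + 10) * (x + 10)) with (2 * ln 2 - 119/10000)
      by (field; lra).
    replace ((2 * (ln 2 - 10 / x) / (x + 10) - 12 / (1024 * x)) * (x + 10))
      with (2 * ln 2 - 20 / x - 12 / 1024 - 120 / (1024 * x)) by (field; lra).
    assert (20 / x + 120 / (1024 * x) <= 1/10000).
    { apply (Rmult_le_reg_r (1024 * x)); [lra|]. field_simplify; lra. }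
    lra. }
  assert (0 < (2 * ln 2 - 119/10000) / (x + 10)) by (apply Rdiv_lt_0_compat; lra).
  apply Rle_trans with ((1 - / 10000000) * ((2 * ln 2 - 119/10000) / (x + 10))).
  - apply (Rmult_le_reg_r (x + 10)); [lra|].
    field_simplify; lra.
  - apply Rmult_le_compat; lra.
Qed.

Lemma loglog_scale_le x : 10000000 <= x -> 2048000 <= ln x ->
  (x + 10) * ln (x + 10) * ln (ln (x + 10)) ^ 2 <=
  (1 + 1/1000) ^ 4 * (x * ln x * ln (ln x) ^ 2).
Proof.
  intros Hx HL.
  assert (Ha : x + 10 <= (1 + 1/1000) * x) by lra.
  assert (HLa : ln x <= ln (x + 10)) by (apply ln_le; lra).
  assert (HLa' : ln (x + 10) <= (1 + 1/1000) * ln x).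
  { replace (x + 10) with (x * (1 + 10 / x)) by (field; lra).
    assert (0 < 10 / x) by (apply Rdiv_lt_0_compat; lra).
    assert (10 / x <= 1) by (apply (Rmult_le_reg_r x); [lra|]; field_simplify; lra).
    rewrite ln_mult by lra. pose proof (ln1p_le (10 / x) ltac:(lra)). lra. }
  assert (Hl : 1 <= ln (ln x)) by (apply one_le_ln; lra).
  assert (Hll : ln (ln x) <= ln (ln (x + 10))) by (apply ln_le; lra).
  assert (Hll' : ln (ln (x + 10)) <= (1 + 1/1000) * ln (ln x)).
  { apply Rle_trans with (ln ((1 + 1/1000) * ln x)); [apply ln_le; lra|].
    rewrite ln_mult by lra. pose proof (ln1p_le (1/1000) ltac:(lra)). lra. }
  replace ((1 + 1/1000) ^ 4 * (x * ln x * ln (ln x) ^ 2))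
    with (((1 + 1/1000) * x) * ((1 + 1/1000) * ln x) * ((1 + 1/1000) * ln (ln x)) ^ 2) by ring.
  apply Rmult_le_compat; [nra | nra | apply Rmult_le_compat; lra | apply pow_incr; lra].
Qed.
Lemma lnln_pos x : 10 <= x -> 0 < ln (ln x).
Proof.
  intros Hx. rewrite <- ln_1. apply ln_increasing; [lra|].
  apply Rlt_le_trans with (ln 10); [|apply ln_le; lra].
  apply Rle_lt_trans with (ln 3); [apply one_le_ln; lra | apply ln_increasing; lra].
Qed.

Lemma loglog_denom_pos x : 10 <= x -> 0 < x * ln x * ln (ln x) ^ 2.
Proof.
  intros Hx. pose proof (lnln_pos x Hx). pose proof (one_le_ln x ltac:(lra)).
  apply Rmult_lt_0_compat; [nra | apply pow_lt; lra].
Qed.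

Lemma g_loglog_add n k : g_loglog (n + k) = / ln (ln (INR n + 10 + INR k)).
Proof. unfold g_loglog. rewrite plus_INR. do 3 f_equal. ring. Qed.

Lemma g_loglog_pos n : 0 < g_loglog n.
Proof. apply Rinv_0_lt_compat, lnln_pos. pose proof (pos_INR n). lra. Qed.

Lemma g_loglog_le m n : (m <= n)%nat -> g_loglog n <= g_loglog m.
Proof.
  intros Hmn. unfold g_loglog.
  assert (Hm := pos_INR m). assert (INR m <= INR n) by (apply le_INR, Hmn).
  apply Rinv_le_contravar; [apply lnln_pos; lra|].
  apply ln_le; [apply Rlt_le_trans with 1; [lra | apply one_le_ln; lra] | apply ln_le; lra].
Qed.

Definition frag_term (mu g : nat -> R) (n k : nat) : R := mu (S k) * (g (n + S k)%nat - g n).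

Lemma Lf_frag_term mu g n : Lf mu g n = INR n * Series (frag_term mu g n).
Proof. reflexivity. Qed.

Lemma Phi_shift mu n : (1 <= n)%nat ->
  Phi mu n = INR n * sum_f_R0 (fun i => INR (S i) * mu (S i)) (n - 1).
Proof.
  intros Hn. unfold Phi. rewrite decomp_sum by lia.
  replace (pred n) with (n - 1)%nat by lia. change (INR 0) with 0. ring.
Qed.

Section LoglogBound.

Variables (mu : nat -> R) (b alpha : R) (K0 : nat).
Hypothesis mu_nonneg : forall k, (1 <= k)%nat -> 0 <= mu k.
Hypothesis mu_summable : ex_series (fun k => mu (S k)).
Hypothesis b_pos : 0 < b.
Hypothesis alpha_nonneg : 0 <= alpha.
Hypothesis K0_ge2 : (2 <= K0)%nat.
Hypothesis mu_close : forall k, (K0 <= k)%nat ->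
  (1 - 1/1000) * (b * Rpower (ln (INR k)) alpha / INR k ^ 2) <= mu k <=
  (1 + 1/1000) * (b * Rpower (ln (INR k)) alpha / INR k ^ 2).

Lemma frag_term_nonpos n k : frag_term mu g_loglog n k <= 0.
Proof.
  unfold frag_term. assert (0 <= mu (S k)) by (apply mu_nonneg; lia).
  assert (g_loglog (n + S k) <= g_loglog n) by (apply g_loglog_le; lia). nra.
Qed.

Lemma ex_series_frag_term n : ex_series (frag_term mu g_loglog n).
Proof.
  apply (@ex_series_le _ R_CompleteNormedModule _ (fun k => mu (S k) * g_loglog n));
    [|apply ex_series_scal_r, mu_summable].
  intros k. change (norm (frag_term mu g_loglog n k)) with (Rabs (frag_term mu g_loglog n k)).
  rewrite Rabs_left1 by apply frag_term_nonpos. unfold frag_term.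
  assert (0 <= mu (S k)) by (apply mu_nonneg; lia).
  assert (0 < g_loglog (n + S k)) by apply g_loglog_pos. nra.
Qed.

Lemma Rpower_ln_le x y : 2 <= x <= y -> Rpower (ln x) alpha <= Rpower (ln y) alpha.
Proof.
  intros Hxy. apply Rle_Rpower_l; [exact alpha_nonneg|]. split; [|apply ln_le; lra].
  rewrite <- ln_1. apply ln_increasing; lra.
Qed.

Section LargeN.

Variable n : nat.
Hypothesis n_large : 10000000 <= INR n.
Hypothesis ln_n_large : 2048000 <= ln (INR n).

Local Notation an := (INR n + 10).
Local Notation Pn := (Rpower (ln (INR n)) alpha).
Local Notation Dn := (an * ln an * ln (ln an) ^ 2).

Lemma n_ge1 : (1 <= n)%nat.
Proof. apply INR_le. simpl. lra. Qed.

Lemma Pn_ge1 : 1 <= Pn.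
Proof. rewrite <- (Rpower_O (ln (INR n))) by lra. apply Rle_Rpower; lra. Qed.

Lemma Dn_pos : 0 < Dn.
Proof. apply loglog_denom_pos. lra. Qed.

Lemma scale_pos : 0 < b * Pn / Dn.
Proof. pose proof Pn_ge1. apply Rdiv_lt_0_compat; [nra | exact Dn_pos]. Qed.

Lemma ln_an_ge : 2048000 <= ln an.
Proof. apply Rle_trans with (ln (INR n)); [lra | apply ln_le; lra]. Qed.

Lemma mu_small_or_le k : (1 <= k <= n)%nat ->
  INR k <= INR K0 \/ mu k <= (1 + 1/1000) * b * Pn / INR k ^ 2.
Proof.
  intros Hk. destruct (Nat.le_gt_cases K0 k) as [HK | HK]; [right | left; apply le_INR; lia].
  assert (H2k : 2 <= INR k) by (change 2 with (INR 2); apply le_INR; lia).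
  assert (INR k <= INR n) by (apply le_INR; lia).
  apply Rle_trans with (1 := proj2 (mu_close k HK)).
  unfold Rdiv. rewrite !Rmult_assoc. apply Rmult_le_compat_l; [lra|].
  rewrite <- !Rmult_assoc. apply Rmult_le_compat_r; [apply Rlt_le, Rinv_0_lt_compat; nra|].
  apply Rmult_le_compat_l; [lra | apply Rpower_ln_le; lra].
Qed.

Lemma mu_ge_of_ge k : (K0 <= n <= k)%nat -> (1 - 1/1000) * b * Pn / INR k ^ 2 <= mu k.
Proof.
  intros Hk. assert (INR n <= INR k) by (apply le_INR; lia).
  apply Rle_trans with (2 := proj1 (mu_close k ltac:(lia))).
  unfold Rdiv. rewrite !Rmult_assoc. apply Rmult_le_compat_l; [lra|].
  rewrite <- !Rmult_assoc. apply Rmult_le_compat_r; [apply Rlt_le, Rinv_0_lt_compat; nra|].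
  apply Rmult_le_compat_l; [lra | apply Rpower_ln_le; lra].
Qed.

Lemma near_term_le i : (i <= n - 1)%nat ->
  frag_term mu g_loglog n i + INR (S i) * mu (S i) / Dn <=
  (1 + 1/1000) / (ln an * ln (ln an) ^ 2) *
    (INR K0 ^ 2 / an ^ 2 * mu (S i) + (1 + 1/1000) * b * Pn / an * / (2 * an + INR (S i))).
Proof.
  intros Hi. pose proof n_ge1. pose proof Pn_ge1. pose proof ln_an_ge.
  assert (Hx : 1 <= INR (S i) <= INR n) by (split; [apply (le_INR 1) | apply le_INR]; lia).
  assert (Hm : 0 <= mu (S i)) by (apply mu_nonneg; lia).
  assert (Hinc := inv_lnln_increment_near_le an (INR (S i)) ltac:(lra) ltac:(lra) ltac:(lra)).
  assert (Hw := near_weight_le an (INR (S i)) (mu (S i)) (INR K0) ((1 + 1/1000) * b * Pn)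
                  ltac:(lra) (proj1 Hx) Hm ltac:(nra) (mu_small_or_le (S i) ltac:(lia))).
  unfold frag_term. rewrite g_loglog_add. unfold g_loglog.
  set (a := INR n + 10) in *. set (L := ln a) in *. set (l := ln L) in *.
  set (w := (INR (S i) / a) ^ 2 / (2 + INR (S i) / a)) in *.
  assert (Hl : 1 <= l) by (apply one_le_ln; lra).
  apply Rle_trans with (mu (S i) * ((1 + 1/1000) * w / (L * l ^ 2))).
  - replace (INR (S i) * mu (S i) / (a * L * l ^ 2))
      with (mu (S i) * (INR (S i) / (a * L * l ^ 2))) by (field; repeat split; unfold a; lra).
    rewrite <- Rmult_plus_distr_l. apply Rmult_le_compat_l; lra.
  - replace (mu (S i) * ((1 + 1/1000) * w / (L * l ^ 2)))
      with ((1 + 1/1000) / (L * l ^ 2) * (mu (S i) * w)) by (field; lra).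
    apply Rmult_le_compat_l; [apply Rdiv_le_0_compat; nra|].
    replace ((1 + 1/1000) * b * Pn / a * / (2 * a + INR (S i)))
      with ((1 + 1/1000) * b * Pn / (a * (2 * a + INR (S i)))) by (field; unfold a; lra).
    lra.
Qed.

Lemma near_sum_le : 1000 * INR K0 ^ 2 * Series (fun k => mu (S k)) <= b * INR n ->
  sum_f_R0 (fun i => frag_term mu g_loglog n i + INR (S i) * mu (S i) / Dn) (n - 1)
  <= 46/100 * (b * Pn / Dn).
Proof.
  intros Hsmall. pose proof n_ge1. pose proof Pn_ge1. pose proof ln_an_ge.
  eapply Rle_trans; [apply sum_Rle; intros i Hi; apply near_term_le, Hi|].
  set (a := INR n + 10) in *. set (L := ln a) in *. set (l := ln L) in *.
  set (P := Pn) in *. set (Mt := Series (fun k => mu (S k))) in *.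
  assert (Hl : 1 <= l) by (apply one_le_ln; lra).
  set (c := (1 + 1/1000) / (L * l ^ 2)).
  replace (sum_f_R0 _ (n - 1)) with
    (c * (INR K0 ^ 2 / a ^ 2 * sum_f_R0 (fun i => mu (S i)) (n - 1) +
          (1 + 1/1000) * b * P / a * sum_f_R0 (fun i => / (2 * a + INR (S i))) (n - 1)))
    by (generalize (n - 1)%nat; intros m; induction m as [|m IH];
        [simpl; ring | rewrite !tech5, <- IH; ring]).
  assert (Hmu : sum_f_R0 (fun i => mu (S i)) (n - 1) <= Mt)
    by (apply sum_le_Series; [exact mu_summable | intros k; apply mu_nonneg; lia]).
  assert (Hinv := sum_inv_near_le a (n - 1) ltac:(unfold a; lra)
                    ltac:(replace (S (n - 1)) with n by lia; unfold a; lra)).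
  (* the fragments below K0 weigh at most K0^2 Mt / a^2, negligible for n large *)
  assert (HMt : INR K0 ^ 2 / a ^ 2 * Mt <= 1/1000 * (b * P / a)).
  { apply (Rmult_le_reg_r (1000 * a ^ 2)); [unfold a; nra|].
    replace (INR K0 ^ 2 / a ^ 2 * Mt * (1000 * a ^ 2)) with (1000 * INR K0 ^ 2 * Mt)
      by (field; unfold a; lra).
    replace (1/1000 * (b * P / a) * (1000 * a ^ 2)) with (b * P * a) by (field; unfold a; lra).
    assert (0 <= b * (P - 1) * a) by (apply Rmult_le_pos; [nra | unfold a; lra]).
    unfold a in *; lra. }
  assert (HK0 : 0 <= INR K0 ^ 2 / a ^ 2) by (apply Rdiv_le_0_compat; [nra | unfold a; nra]).
  assert (HbPa : 0 < b * P / a) by (apply Rdiv_lt_0_compat; [nra | unfold a; lra]).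
  replace (c * (INR K0 ^ 2 / a ^ 2 * sum_f_R0 (fun i => mu (S i)) (n - 1) +
                (1 + 1/1000) * b * P / a * sum_f_R0 (fun i => / (2 * a + INR (S i))) (n - 1)))
    with ((1 + 1/1000) * (INR K0 ^ 2 / a ^ 2 * sum_f_R0 (fun i => mu (S i)) (n - 1) +
            (1 + 1/1000) * (b * P / a) * sum_f_R0 (fun i => / (2 * a + INR (S i))) (n - 1))
          * / (L * l ^ 2)) by (unfold c; field; repeat split; unfold a; lra).
  replace (46/100 * (b * P / (a * L * l ^ 2))) with (46/100 * (b * P / a) * / (L * l ^ 2))
    by (field; repeat split; unfold a; lra).
  apply Rmult_le_compat_r; [apply Rlt_le, Rinv_0_lt_compat; nra|].
  assert (INR K0 ^ 2 / a ^ 2 * sum_f_R0 (fun i => mu (S i)) (n - 1) <= 1/1000 * (b * P / a))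
    by (apply Rle_trans with (2 := HMt); apply Rmult_le_compat_l; lra).
  assert (sum_f_R0 (fun i => / (2 * a + INR (S i))) (n - 1) * (b * P / a) <= 45/100 * (b * P / a))
    by (apply Rmult_le_compat_r; lra).
  nra.
Qed.

Lemma INR_window : INR (1023 * n - 1) = 1023 * INR n - 1.
Proof.
  pose proof n_ge1. rewrite minus_INR, mult_INR by lia. rewrite (INR_IZR_INZ 1023). reflexivity.
Qed.

Lemma far_term_le i : (K0 <= n)%nat -> (i <= 1023 * n - 1)%nat ->
  frag_term mu g_loglog n (n + i) <=
  - ((1 - 1/1000) ^ 2 * b * Pn / (ln an * ln (ln an) ^ 2)) *
    (ln (1 + (INR n + 1 + INR i) / an) / (INR n + 1 + INR i) ^ 2).
Proof.
  intros HnK0 Hi. pose proof n_ge1. pose proof Pn_ge1. pose proof ln_an_ge.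
  assert (Hx : INR (S (n + i)) = INR n + 1 + INR i) by (rewrite S_INR, plus_INR; ring).
  assert (Hxi : INR n + 1 <= INR n + 1 + INR i <= 1024 * INR n).
  { assert (INR i <= INR (1023 * n - 1)) by (apply le_INR, Hi).
    rewrite INR_window in *. pose proof (pos_INR i). lra. }
  assert (Hm := mu_ge_of_ge (S (n + i)) ltac:(lia)). rewrite Hx in Hm.
  assert (Hinc := inv_lnln_increment_far_le an (INR n + 1 + INR i)
                    ltac:(lra) ltac:(lra) ltac:(lra)).
  unfold frag_term. rewrite g_loglog_add, Hx. unfold g_loglog.
  set (x := INR n + 1 + INR i) in *. set (a := INR n + 10) in *.
  set (L := ln a) in *. set (l := ln L) in *. set (u := ln (1 + x / a)) in *.
  assert (Hl : 1 <= l) by (apply one_le_ln; lra).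
  assert (Hxa : 0 < x / a) by (apply Rdiv_lt_0_compat; unfold a; lra).
  assert (Hu : 0 <= u) by (apply ln_nonneg; lra).
  assert (Hc : 0 <= (1 - 1/1000) * u / (L * l ^ 2)) by (apply Rdiv_le_0_compat; nra).
  replace (- ((1 - 1/1000) * u) / (L * l ^ 2)) with (- ((1 - 1/1000) * u / (L * l ^ 2))) in Hinc
    by (field; lra).
  replace (- ((1 - 1/1000) ^ 2 * b * Pn / (L * l ^ 2)) * (u / x ^ 2))
    with ((1 - 1/1000) * b * Pn / x ^ 2 * - ((1 - 1/1000) * u / (L * l ^ 2)))
    by (field; repeat split; lra).
  assert (0 <= (1 - 1/1000) * b * Pn / x ^ 2) by (apply Rdiv_le_0_compat; nra).
  apply Rle_trans with (mu (S (n + i)) * - ((1 - 1/1000) * u / (L * l ^ 2))).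
  - apply Rmult_le_compat_l; lra.
  - rewrite <- !Ropp_mult_distr_r. apply Ropp_le_contravar, Rmult_le_compat_r; lra.
Qed.

Lemma far_sum_le : (K0 <= n)%nat ->
  sum_f_R0 (fun i => frag_term mu g_loglog n (n + i)) (1023 * n - 1)
  <= - (2 * ln 2 - 2/100) * (b * Pn / Dn).
Proof.
  intros HnK0. pose proof n_ge1. pose proof Pn_ge1. pose proof ln_an_ge.
  eapply Rle_trans; [apply sum_Rle; intros i Hi; apply far_term_le; [exact HnK0 | exact Hi]|].
  set (a := INR n + 10) in *. set (L := ln a) in *. set (l := ln L) in *. set (P := Pn) in *.
  assert (Hl : 1 <= l) by (apply one_le_ln; lra).
  set (c := (1 - 1/1000) ^ 2 * b * P / (L * l ^ 2)).
  assert (Hc : 0 < c) by (apply Rdiv_lt_0_compat; nra).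
  replace (sum_f_R0 _ (1023 * n - 1)) with
    (- c * sum_f_R0 (fun i => ln (1 + (INR n + 1 + INR i) / a) / (INR n + 1 + INR i) ^ 2)
                    (1023 * n - 1))
    by (rewrite scal_sum; apply sum_eq; intros; unfold c; ring).
  assert (Htail := tail_sum_ge a (INR n) (1023 * n - 1) ltac:(unfold a; lra) ltac:(lra)).
  replace (INR n + 1 + INR (1023 * n - 1)) with (1024 * INR n) in Htail
    by (rewrite INR_window; ring).
  assert (Hwin := tail_window_ge (INR n) n_large). fold a in Hwin.
  assert (Hln2 := ln_lt_2). assert (Hln2' := ln2_lt_1).
  apply Rle_trans with (- c * ((2 * ln 2 - 12/1000) / a)).
  { rewrite <- !Ropp_mult_distr_l. apply Ropp_le_contravar, Rmult_le_compat_l; lra. }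
  replace (- c * ((2 * ln 2 - 12/1000) / a))
    with (- ((1 - 1/1000) ^ 2 * (2 * ln 2 - 12/1000)) * (b * P / (a * L * l ^ 2)))
    by (unfold c; field; repeat split; unfold a; lra).
  apply Rmult_le_compat_r; [apply Rdiv_le_0_compat; [nra | apply loglog_denom_pos; unfold a; lra]|].
  nra.
Qed.

Lemma scale_ge :
  b * Pn / (ln (INR n) * ln (ln (INR n)) ^ 2) <= (1 + 1/1000) ^ 4 * (INR n * (b * Pn / Dn)).
Proof.
  assert (Hs := loglog_scale_le (INR n) n_large ln_n_large).
  pose proof Pn_ge1. pose proof Dn_pos.
  assert (HE : 0 < INR n * ln (INR n) * ln (ln (INR n)) ^ 2) by (apply loglog_denom_pos; lra).
  assert (Hl : 1 <= ln (ln (INR n))) by (apply one_le_ln; lra).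
  set (P := Pn) in *. set (D := Dn) in *. set (E := INR n * ln (INR n) * ln (ln (INR n)) ^ 2) in *.
  replace (b * P / (ln (INR n) * ln (ln (INR n)) ^ 2)) with (INR n * (b * P) / E)
    by (unfold E; field; repeat split; lra).
  replace ((1 + 1/1000) ^ 4 * (INR n * (b * P / D))) with (INR n * (b * P) / (D / (1 + 1/1000) ^ 4))
    by (field; lra).
  apply Rmult_le_compat_l; [apply Rmult_le_pos; nra|].
  apply Rinv_le_contravar; [apply Rdiv_lt_0_compat; lra|].
  apply (Rmult_le_reg_r ((1 + 1/1000) ^ 4)); [lra|]. field_simplify; lra.
Qed.

Lemma Lf_loglog_le : (K0 <= n)%nat ->
  1000 * INR K0 ^ 2 * Series (fun k => mu (S k)) <= b * INR n ->
  Lf mu g_loglog n <=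
    - Phi mu n / ((INR n + 10) * ln (INR n + 10) * (ln (ln (INR n + 10))) ^ 2)
    - (2 * ln 2 - 1 / 2) * b * Rpower (ln (INR n)) (alpha - 1) / (ln (ln (INR n))) ^ 2.
Proof.
  intros HnK0 Hsmall. pose proof n_ge1. pose proof Dn_pos. pose proof ln2_lt_1.
  assert (Hnear := near_sum_le Hsmall). assert (Hfar := far_sum_le HnK0).
  assert (Hunit := scale_ge).
  assert (Hsplit := Series_le_sum_split (frag_term mu g_loglog n) n (1023 * n - 1) n_ge1
                      (ex_series_frag_term n) (frag_term_nonpos n)).
  rewrite plus_sum in Hnear.
  change (sum_f_R0 (fun i => frag_term mu g_loglog n i) (n - 1))
    with (sum_f_R0 (frag_term mu g_loglog n) (n - 1)) in Hnear.
  replace (sum_f_R0 (fun i => INR (S i) * mu (S i) / Dn) (n - 1))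
    with (sum_f_R0 (fun i => INR (S i) * mu (S i)) (n - 1) / Dn) in Hnear
    by (unfold Rdiv; rewrite Rmult_comm, scal_sum; apply sum_eq; intros; ring).
  rewrite Lf_frag_term, Phi_shift by exact n_ge1.
  replace (Rpower (ln (INR n)) (alpha - 1)) with (Pn / ln (INR n))
    by (unfold Rminus; rewrite Rpower_plus, Rpower_Ropp, Rpower_1 by lra; reflexivity).
  replace ((2 * ln 2 - 1 / 2) * b * (Pn / ln (INR n)) / ln (ln (INR n)) ^ 2)
    with ((2 * ln 2 - 1 / 2) * (b * Pn / (ln (INR n) * ln (ln (INR n)) ^ 2))).
  2: { assert (1 <= ln (ln (INR n))) by (apply one_le_ln; lra). field. split; lra. }
  set (S1 := Series (frag_term mu g_loglog n)) in *.
  set (Sp := sum_f_R0 (fun i => INR (S i) * mu (S i)) (n - 1)) in *.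
  set (Q := b * Pn / (ln (INR n) * ln (ln (INR n)) ^ 2)) in *.
  set (U := b * Pn / Dn) in *.
  assert (Hc : 0 < 2 * ln 2 - 1/2) by (pose proof ln_lt_2; lra).
  assert (HnU : 0 <= INR n * U) by (apply Rmult_le_pos; [lra | apply Rlt_le, scale_pos]).
  assert (Hsum : INR n * (S1 + Sp / Dn) <= INR n * (46/100 * U - (2 * ln 2 - 2/100) * U))
    by (apply Rmult_le_compat_l; lra).
  assert ((2 * ln 2 - 1/2) * Q <= (2 * ln 2 - 48/100) * (INR n * U)).
  { apply Rle_trans with ((2 * ln 2 - 1/2) * ((1 + 1/1000) ^ 4 * (INR n * U))).
    - apply Rmult_le_compat_l; lra.
    - rewrite <- Rmult_assoc. apply Rmult_le_compat_r; lra. }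
  unfold Rdiv in *. nra.
Qed.

End LargeN.
End LoglogBound.

Lemma eventually_ratio_bounds (mu d : nat -> R) (eps : R) : 0 < eps ->
  eventually (fun k => 0 < d k) -> is_lim_seq (fun k => mu k / d k) 1 ->
  eventually (fun k => (1 - eps) * d k <= mu k <= (1 + eps) * d k).
Proof.
  intros Heps Hd Hlim. apply is_lim_seq_spec in Hlim.
  apply (filter_imp (fun k => 0 < d k /\ Rabs (mu k / d k - 1) < eps)).
  - intros k [Hdk Hk]. apply Rabs_def2 in Hk.
    replace (mu k) with (mu k / d k * d k) by (field; lra).
    split; apply Rmult_le_compat_r; lra.
  - apply filter_and; [exact Hd | exact (Hlim (mkposreal eps Heps))].
Qed.

Lemma eventually_ge_INR (X : R) : eventually (fun n => X <= INR n).
Proof.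
  apply (filter_imp (fun n => X < INR n)); [intros n; lra|].
  exact (proj2 (is_lim_seq_spec INR p_infty) is_lim_seq_INR X).
Qed.

Lemma eventually_ge_ln_INR (X : R) : eventually (fun n => X <= ln (INR n)).
Proof.
  apply (filter_imp (fun n => exp X <= INR n)); [|apply eventually_ge_INR].
  intros n Hn. rewrite <- (ln_exp X). apply ln_le; [apply exp_pos | exact Hn].
Qed.

Theorem lemma5p2 (mu : nat -> R) (b alpha : R) :
  finite_measure_Npos mu ->
  0 < b -> 0 < alpha ->
  is_lim_seq (fun n => mu n / (b * Rpower (ln (INR n)) alpha / (INR n) ^ 2)) 1 ->
  forall eps : R, 0 < eps ->
  exists N : nat, forall n : nat, (N <= n)%nat ->
    Lf mu g_loglog n <=
      - Phi mu n / ((INR n + 10) * ln (INR n + 10) * (ln (ln (INR n + 10))) ^ 2)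
      - (2 * ln 2 - 1 / 2) * b * Rpower (ln (INR n)) (alpha - 1) / (ln (ln (INR n))) ^ 2
      + eps * (Rpower (ln (INR n)) (alpha - 1) / (ln (ln (INR n))) ^ 2).
Proof.
  intros [Hmu_nonneg Hmu_summable] Hb Halpha Hlim eps Heps.
  assert (Hdens : eventually (fun k => 0 < b * Rpower (ln (INR k)) alpha / INR k ^ 2)).
  { apply (filter_imp (fun k => 2 <= INR k)); [|apply eventually_ge_INR].
    intros k Hk. apply Rdiv_lt_0_compat; [apply Rmult_lt_0_compat; [lra | apply exp_pos] | nra]. }
  destruct (eventually_ratio_bounds _ _ (1/1000) ltac:(lra) Hdens Hlim) as [N HN].
  set (K0 := Nat.max N 2).
  destruct (filter_and _ _ (eventually_ge_INR (INR K0))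
             (filter_and _ _ (eventually_ge_INR 10000000)
               (filter_and _ _ (eventually_ge_ln_INR 2048000)
                 (eventually_ge_INR (1000 * INR K0 ^ 2 * Series (fun k => mu (S k)) / b)))))
    as [M HM].
  exists M. intros n Hn. destruct (HM n Hn) as (HK0n & Hn7 & Hln & Hsmall).
  apply INR_le in HK0n.
  apply (Rmult_le_compat_r b) in Hsmall; [|lra].
  replace (1000 * INR K0 ^ 2 * Series (fun k => mu (S k)) / b * b)
    with (1000 * INR K0 ^ 2 * Series (fun k => mu (S k))) in Hsmall by (field; lra).
  assert (Hlf := Lf_loglog_le mu b alpha K0 Hmu_nonneg Hmu_summable Hb (Rlt_le _ _ Halpha)
                  ltac:(lia) (fun k Hk => HN k ltac:(lia)) n Hn7 Hln HK0n ltac:(lra)).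
  assert (1 <= ln (ln (INR n))) by (apply one_le_ln; lra).
  assert (0 <= eps * (Rpower (ln (INR n)) (alpha - 1) / ln (ln (INR n)) ^ 2))
    by (apply Rmult_le_pos; [lra | apply Rdiv_le_0_compat; [apply Rlt_le, exp_pos | nra]]).
  lra.
Qed.
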